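(* Fix a nonempty partition $\lambda$. For $n>|\lambda|+\lambda_1$ let $N(n)$ be the number of standard Young tableaux of shape $\lambda[n]$, and let $G(n)$ be the number of those standard Young tableaux $T[n]$ of shape $\lambda[n]$ (where $T$ is the part below the top row, of shape $\lambda$) such that any two entries of $T$ differ by at least $2$ and $2$ and $n$ are not both entries of $T$. Then $\lim_{n\to\infty} G(n)/N(n)=1$.
   Context: For a partition $\lambda=(\lambda_1\ge\dots\ge\lambda_\ell)$ with $|\lambda|=\lambda_1+\dots+\lambda_\ell$, $\lambda[n]$ is the partition of $n$ obtained by adding a new largest part of size $n-|\lambda|$ (i.e. $(n-|\lambda|,\lambda_1,\dots,\lambda_\ell)$). For a tableau $T$ with distinct positive entries, $T[n]$ denotes the tableau obtained by placing above $T$ a top row consisting of all elements of $\{1,\dots,n\}$ not in $T$, in increasing order. A standard Young tableau with $n$ boxes has entries $1,\dots,n$ increasing along rows and down columns. *)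

From HB Require Import structures.
From mathcomp Require Import all_boot all_order all_algebra.
From mathcomp Require Import all_classical all_reals all_analysis.

Set Implicit Arguments.
Unset Strict Implicit.
Unset Printing Implicit Defensive.

Definition is_partition (lam : seq nat) : bool :=
  sorted geq lam && all (fun x => 0 < x) lam.

Definition pad_shape (lam : seq nat) (n : nat) : seq nat :=
  (n - sumn lam) :: lam.

(* A tableau is a list of rows (top row first). *)
Definition entries (t : seq (seq nat)) : seq nat := flatten t.

Definition is_syt (t : seq (seq nat)) : bool :=
  [&& perm_eq (entries t) (iota 1 (size (entries t))),
      all (sorted ltn) t,
      sorted geq (map size t) &
      all (fun i => all (fun j =>
             nth 0 (nth [::] t i) j < nth 0 (nth [::] t i.+1) j)
           (iota 0 (size (nth [::] t i.+1))))
          (iota 0 (size t).-1)].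

(* Tableaux of shape sh with entries 1..n are exactly the reshapings by sh
   of the orderings of 1..n (n = |sh|); this correspondence is a bijection,
   so counting orderings counts tableaux. *)
Definition num_syt_such (sh : seq nat) (P : seq (seq nat) -> bool) : nat :=
  count (fun p => is_syt (reshape sh p) && P (reshape sh p))
        (permutations (iota 1 (sumn sh))).

Definition N_syt (lam : seq nat) (n : nat) : nat :=
  num_syt_such (pad_shape lam n) (fun _ => true).

Definition good_tableau (n : nat) (t : seq (seq nat)) : bool :=
  let T := entries (behead t) in
  all (fun x => all (fun y => (x == y) || (x + 2 <= y) || (y + 2 <= x)) T) T
  && ~~ ((2 \in T) && (n \in T)).

Definition G_syt (lam : seq nat) (n : nat) : nat :=
  num_syt_such (pad_shape lam n) (good_tableau n).

(* Let k = |lam| and l1 = lam_1.  A standard tableau of shape lam[n] is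
   determined by the word of its k lower entries, read row by row: the top row
   is the increasing complement.  In a bad tableau this word contains two
   consecutive values or the value n; fixing one letter in terms of another
   leaves at most (k^2 + k) (n+1)^(k-1) such words.  Conversely, choosing the
   i-th lower entry in the i-th of k consecutive blocks of length
   L = (n - l1) / k above l1 always yields a standard tableau, so N(n) >= L^k,
   which is of order n^k.  Hence 1 - G(n)/N(n) = O(1/n). *)

From HB Require Import structures.
From mathcomp Require Import all_classical all_reals all_analysis.
(* Imported last so that finset's [subsetP] and [inE] are not shadowed by
   their classical_sets namesakes. *)
From mathcomp Require Import all_boot all_order all_algebra.
From mathcomp Require Import zify.
Set Implicit Arguments.
Unset Strict Implicit.
Unset Printing Implicit Defensive.

Lemma sorted_reshape (sh s : seq nat) :
  sorted ltn s -> all (sorted ltn) (reshape sh s).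
Proof.
elim: sh s => //= a sh IH s hs.
by rewrite take_sorted //= IH // drop_sorted.
Qed.

Lemma partition_nth_ge (lam : seq nat) i :
  is_partition lam -> i.+1 < size lam -> nth 0 lam i.+1 <= nth 0 lam i.
Proof.
case/andP=> /(sorted_leq_nth (fun _ _ _ h1 h2 => leq_trans h2 h1) leqnn 0) h _ hi.
by apply: h; rewrite ?inE // ltnW.
Qed.

Lemma reshape_col_lt (lam s : seq nat) i j :
  is_partition lam -> sorted ltn s -> size s = sumn lam ->
  i.+1 < size lam -> j < nth 0 lam i.+1 ->
  nth 0 (nth [::] (reshape lam s) i) j < nth 0 (nth [::] (reshape lam s) i.+1) j.
Proof.
move=> hlam ss hs hi hj; rewrite !nth_reshape.
set S := sumn (take i lam).
have -> : sumn (take i.+1 lam) = S + nth 0 lam i.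
  by rewrite (take_nth 0) ?sumn_rcons //; lia.
have hge := partition_nth_ge hlam hi.
have hpos : 0 < nth 0 lam i by apply: (allP (proj2 (andP hlam))); rewrite mem_nth // ltnW.
have hsum : S + nth 0 lam i + nth 0 lam i.+1 <= size s.
  rewrite hs -[in X in _ <= X](cat_take_drop i.+2 lam) sumn_cat.
  by rewrite (take_nth 0 hi) (take_nth 0 (ltnW hi)) !sumn_rcons -/S; lia.
rewrite !nth_take ?nth_drop //; try lia.
by apply: (sorted_ltn_nth ltn_trans 0 ss); rewrite ?inE; lia.
Qed.

Lemma is_syt_cons_reshape (lam c s : seq nat) :
  is_partition lam -> size s = sumn lam -> head 0 lam <= size c ->
  sorted ltn c -> sorted ltn s ->
  perm_eq (c ++ s) (iota 1 (size c + sumn lam)) ->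
  (forall j, j < head 0 lam -> nth 0 c j < nth 0 s j) ->
  is_syt (c :: reshape lam s).
Proof.
move=> hlam hs hc sc ss hperm htop.
rewrite /is_syt /entries /= reshapeKr ?hs // size_cat hs hperm sc sorted_reshape //=.
have hshape : shape (reshape lam s) = lam by rewrite reshapeKl // hs.
rewrite [map size _]hshape.
apply/andP; split.
  by case/andP: hlam hc => + _; case: (lam) => //= x l -> ->.
rewrite size_reshape; apply/allP => -[|i]; rewrite mem_iota add0n => /andP[_ hi].
- apply/allP => j; rewrite mem_iota add0n => /andP[_].
  rewrite /= nth_reshape /= take0 drop0 size_take.
  case: (lam) hi hs htop => //= x l _ hs htop hj.
  have hjx : j < x by move: hj; case: ifP => // /negbT; rewrite -leqNgt; lia.
  by rewrite nth_take // htop.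
- apply/allP => j; rewrite mem_iota add0n -nth_shape hshape => /andP[_ hj] /=.
  exact: reshape_col_lt.
Qed.

Section BlockWords.

(* The i-th lower entry is chosen in the block ]l1 + i L, l1 + (i+1) L]; as all
   lower entries exceed l1, the top row starts with 1, ..., l1 and lies
   entrywise below the first lower row. *)
Variables (l1 L k n : nat).
Hypothesis blocks_fit : l1 + k * L <= n.

Definition block_pick (f : {ffun 'I_k -> 'I_L}) : seq nat :=
  [seq l1.+1 + i * L + f i | i : 'I_k <- enum 'I_k].

Definition compl_iota (s : seq nat) : seq nat := [seq x <- iota 1 n | x \notin s].

Definition block_word f : seq nat := compl_iota (block_pick f) ++ block_pick f.

Lemma block_pick_sorted f : sorted ltn (block_pick f).
Proof.
rewrite sorted_map.
have : sorted (relpre val ltn) (enum 'I_k).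
  by rewrite -sorted_map val_enum_ord iota_ltn_sorted.
apply: sub_sorted => i j /= hij.
have h1 : f i < L := ltn_ord _.
have h2 : i.+1 * L <= j * L by rewrite leq_mul2r hij orbT.
rewrite mulSn in h2; lia.
Qed.

Lemma block_pick_bounds f x : x \in block_pick f -> l1 < x <= n.
Proof.
case/mapP => i _ ->.
have h1 : f i < L := ltn_ord _.
have h2 : i.+1 * L <= k * L by rewrite leq_mul2r ltn_ord orbT.
rewrite mulSn in h2; lia.
Qed.

Lemma size_block_pick f : size (block_pick f) = k.
Proof. by rewrite size_map size_enum_ord. Qed.

Lemma block_word_perm f : perm_eq (block_word f) (iota 1 n).
Proof.
rewrite /block_word /compl_iota perm_catC perm_sym.
rewrite -(perm_filterC (mem (block_pick f))) perm_sym perm_cat2r.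
apply: uniq_perm; rewrite ?filter_uniq ?iota_uniq //.
  exact: (sorted_uniq ltn_trans ltnn (block_pick_sorted f)).
move=> x; rewrite mem_filter mem_iota /=.
by case hx: (x \in block_pick f) => //=; have := block_pick_bounds hx; lia.
Qed.

Lemma size_compl_block_pick f : size (compl_iota (block_pick f)) = n - k.
Proof.
have := perm_size (block_word_perm f); rewrite /block_word.
by rewrite size_cat size_block_pick size_iota => <-; rewrite addnK.
Qed.

Lemma nth_compl_block_pick f j : j < l1 -> nth 0 (compl_iota (block_pick f)) j = j.+1.
Proof.
move=> hj; rewrite /compl_iota -(subnKC (_ : l1 <= n)); last by lia.
rewrite iotaD filter_cat.
have -> : [seq x <- iota 1 l1 | x \notin block_pick f] = iota 1 l1.
  apply/all_filterP/allP => x; rewrite mem_iota => hx.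
  by apply/negP => /block_pick_bounds; lia.
by rewrite nth_cat size_iota hj nth_iota.
Qed.

Lemma take_block_word f : take (n - k) (block_word f) = compl_iota (block_pick f).
Proof. by rewrite take_size_cat // size_compl_block_pick. Qed.

Lemma drop_block_word f : drop (n - k) (block_word f) = block_pick f.
Proof. by rewrite drop_size_cat // size_compl_block_pick. Qed.

Lemma block_word_inj : injective block_word.
Proof.
move=> f g /(congr1 (drop (n - k))); rewrite !drop_block_word => /eq_in_map h.
by apply/ffunP => i; apply/val_inj/(addnI (h i (mem_enum _ _))).
Qed.

End BlockWords.

Lemma sumn_pad_shape lam n : sumn lam <= n -> sumn (pad_shape lam n) = n.
Proof. by rewrite /= => h; rewrite subnK. Qed.

Lemma sumn_partition_gt0 lam : is_partition lam -> lam != [::] -> 0 < sumn lam.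
Proof. by case/andP=> _; case: lam => //= x l /andP[hx _] _; rewrite ltn_addr. Qed.

Lemma N_syt_ge lam n (k := sumn lam) (l1 := head 0 lam) :
  is_partition lam -> k + l1 <= n -> ((n - l1) %/ k) ^ k <= N_syt lam n.
Proof.
move=> hlam hn; set L := (n - l1) %/ k.
have hl1k : l1 <= k by rewrite /l1 /k; case: (lam) => //= x l; apply: leq_addr.
have hfit : l1 + k * L <= n by have := leq_divM (n - l1) k; rewrite -/L mulnC; lia.
rewrite /N_syt /num_syt_such sumn_pad_shape; last by lia.
rewrite -(card_ord k) -(card_ord L) -card_ffun -size_filter cardE.
rewrite -(size_map (block_word l1 n)).
apply: uniq_leq_size => [|_ /mapP[f _ ->]].
  by rewrite map_inj_uniq ?enum_uniq //; apply: block_word_inj.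
rewrite mem_filter mem_permutations block_word_perm // andbT.
rewrite /pad_shape -/k /= drop_block_word // take_block_word //.
rewrite andbT; apply: is_syt_cons_reshape => //.
- exact: size_block_pick.
- by rewrite size_compl_block_pick //; lia.
- exact/sorted_filter/iota_ltn_sorted/ltn_trans.
- exact: block_pick_sorted.
- by rewrite size_compl_block_pick // subnK; [exact: block_word_perm | lia].
- move=> j hj; rewrite nth_compl_block_pick //.
  have hjk : j < size (block_pick l1 f) by rewrite size_block_pick; lia.
  by case/andP: (block_pick_bounds hfit (mem_nth 0 hjk)) => + _; exact: leq_ltn_trans hj.
Qed.

Lemma leq_card_bigcup (I T : finType) (A : I -> {set T}) :
  #|\bigcup_i A i| <= \sum_i #|A i|.
Proof.
elim/big_rec2: _ => [|i m U _ leUm]; first by rewrite cards0.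
by rewrite (leq_trans (leq_card_setU _ _).1) ?leq_add2l.
Qed.

Lemma card_ffun_determined_off k (rT : finType) (j : 'I_k) (S : {set {ffun 'I_k -> rT}}) :
  {in S &, forall f g : {ffun 'I_k -> rT}, (forall l, l != j -> f l = g l) -> f = g} ->
  #|S| <= #|rT| ^ k.-1.
Proof.
move=> detS; pose restr (f : {ffun 'I_k -> rT}) := [ffun l => f (lift j l)].
rewrite -(card_in_imset (f := restr)); last first.
  move=> f g hf hg /ffunP eq_fg; apply: detS => // l.
  case: (unliftP j l) => [l' ->|->]; last by rewrite eqxx.
  by move=> _; have := eq_fg l'; rewrite !ffunE.
by rewrite (leq_trans (max_card _)) // card_ffun card_ord.
Qed.

Lemma card_bigcup_determined_off k (I rT : finType) (C : I -> {set {ffun 'I_k -> rT}})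
    (coord : I -> 'I_k) :
  (forall i, {in C i &, forall f g : {ffun 'I_k -> rT},
     (forall l, l != coord i -> f l = g l) -> f = g}) ->
  #|\bigcup_i C i| <= #|I| * #|rT| ^ k.-1.
Proof.
move=> detC; apply: leq_trans (leq_card_bigcup _) _.
by rewrite -sum_nat_const; apply: leq_sum => i _; apply: card_ffun_determined_off (detC i).
Qed.

Section LowerCodes.

Variables k n : nat.

Definition lower_code (r : seq nat) : {ffun 'I_k -> 'I_n.+1} :=
  [ffun i : 'I_k => inord (nth 0 r i)].

Definition codes_with_successor : {set {ffun 'I_k -> 'I_n.+1}} :=
  [set f : {ffun 'I_k -> 'I_n.+1} | [exists i, exists j, val (f j) == (val (f i)).+1]].

Definition codes_with_max : {set {ffun 'I_k -> 'I_n.+1}} :=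
  [set f : {ffun 'I_k -> 'I_n.+1} | [exists j, val (f j) == n]].

Lemma lower_code_val r (i : 'I_k) :
  all (fun x => x <= n) r -> i < size r -> val (lower_code r i) = nth 0 r i.
Proof. by move=> /allP hr hi; rewrite ffunE /= inordK // ltnS hr // mem_nth. Qed.

Lemma lower_code_inj r r' : size r = k -> size r' = k ->
  all (fun x => x <= n) r -> all (fun x => x <= n) r' ->
  lower_code r = lower_code r' -> r = r'.
Proof.
move=> hs hs' hr hr' eq_rr'; apply: (@eq_from_nth _ 0); first by rewrite hs hs'.
move=> i; rewrite hs => hi.
have := congr1 (fun f : {ffun 'I_k -> 'I_n.+1} => val (f (Ordinal hi))) eq_rr'.
by rewrite /= !lower_code_val ?hs ?hs'.
Qed.

Lemma lower_code_successor r a : size r = k -> all (fun x => x <= n) r ->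
  a \in r -> a.+1 \in r -> lower_code r \in codes_with_successor.
Proof.
move=> hs hr ar a1r; have idx x : x \in r -> index x r < k by rewrite -hs index_mem.
rewrite inE; apply/existsP; exists (Ordinal (idx a ar)).
apply/existsP; exists (Ordinal (idx _ a1r)).
by rewrite !lower_code_val ?hs ?idx //= !nth_index.
Qed.

Lemma lower_code_max r : size r = k -> all (fun x => x <= n) r ->
  n \in r -> lower_code r \in codes_with_max.
Proof.
move=> hs hr nr; have hidx : index n r < k by rewrite -hs index_mem.
rewrite inE; apply/existsP; exists (Ordinal hidx).
by rewrite lower_code_val ?hs //= nth_index.
Qed.

Lemma card_codes_with_successor : #|codes_with_successor| <= k * k * n.+1 ^ k.-1.
Proof.
pose C (ij : 'I_k * 'I_k) : {set {ffun 'I_k -> 'I_n.+1}} :=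
  [set f : {ffun 'I_k -> 'I_n.+1} | val (f ij.2) == (val (f ij.1)).+1].
have cover : codes_with_successor \subset \bigcup_ij C ij.
  apply/subsetP => f; rewrite inE => /existsP[i /existsP[j hij]].
  by apply/bigcupP; exists (i, j); rewrite ?inE.
apply: leq_trans (subset_leq_card cover) _.
have := card_bigcup_determined_off (C := C) (coord := snd).
rewrite card_prod !card_ord; apply => -[i j] f g.
rewrite !inE /= => /eqP hf /eqP hg eq_off; apply/ffunP => l.
case: (eqVneq l j) => [->|/eq_off //]; apply: val_inj.
have hij : i != j by apply/eqP => eq_ij; move: hf; rewrite eq_ij => /n_Sn.
by rewrite /= hf hg eq_off // eq_sym.
Qed.

Lemma card_codes_with_max : #|codes_with_max| <= k * n.+1 ^ k.-1.
Proof.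
pose E (j : 'I_k) : {set {ffun 'I_k -> 'I_n.+1}} :=
  [set f : {ffun 'I_k -> 'I_n.+1} | val (f j) == n].
have cover : codes_with_max \subset \bigcup_j E j.
  apply/subsetP => f; rewrite inE => /existsP[j hj].
  by apply/bigcupP; exists j; rewrite ?inE.
apply: leq_trans (subset_leq_card cover) _.
have := card_bigcup_determined_off (C := E) (coord := id).
rewrite !card_ord; apply => j f g.
rewrite !inE => /eqP hf /eqP hg eq_off; apply/ffunP => l.
by case: (eqVneq l j) => [->|/eq_off //]; apply: val_inj; rewrite hf hg.
Qed.

End LowerCodes.

Lemma good_tableauPn n t (T := entries (behead t)) :
  ~~ good_tableau n t -> (exists2 a, a \in T & a.+1 \in T) \/ n \in T.
Proof.
rewrite /good_tableau -/T negb_and negbK => /orP[/allPn[x xT /allPn[y yT]]|/andP[_]].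
  rewrite !negb_or -!ltnNge => /andP[/andP[x_neq_y y_lt_x2] x_lt_y2]; left.
  by case: (ltngtP x y) x_neq_y => [x_lt_y|y_lt_x|] // _;
    [exists x => //; have -> : x.+1 = y by lia | exists y => //; have -> : y.+1 = x by lia].
by right.
Qed.

Lemma perm_sorted_take_eq (T : eqType) (ltT : rel T) d (p q : seq T) :
  transitive ltT -> irreflexive ltT -> perm_eq p q ->
  sorted ltT (take d p) -> sorted ltT (take d q) -> drop d p = drop d q -> p = q.
Proof.
move=> ltT_tr ltT_irr pq sp sq eq_drop.
suff eq_take : take d p = take d q.
  by rewrite -(cat_take_drop d p) eq_take eq_drop cat_take_drop.
apply: (irr_sorted_eq ltT_tr ltT_irr sp sq); apply: perm_mem.
by rewrite -(perm_cat2r (drop d p)) {2}eq_drop !cat_take_drop.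
Qed.

Definition B_syt (lam : seq nat) (n : nat) : nat :=
  num_syt_such (pad_shape lam n) (fun t => ~~ good_tableau n t).

Lemma N_syt_split lam n : N_syt lam n = G_syt lam n + B_syt lam n.
Proof.
rewrite /N_syt /G_syt /B_syt /num_syt_such.
elim: (permutations _) => //= p s ->.
by case: (is_syt _); case: (good_tableau _ _); rewrite /= ?addnS ?addSn ?addn0 ?add0n.
Qed.

Lemma B_syt_le lam n (k := sumn lam) :
  k <= n -> B_syt lam n <= (k * k + k) * n.+1 ^ k.-1.
Proof.
move=> hkn; rewrite /B_syt /num_syt_such sumn_pad_shape // /pad_shape -/k /=.
rewrite -size_filter; set d := n - k; set bad := filter _ _.
have bad_spec p : p \in bad -> [/\ perm_eq p (iota 1 n), size (drop d p) = k,
    all (fun x => x <= n) (drop d p), sorted ltn (take d p) &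
    ~~ good_tableau n (take d p :: reshape lam (drop d p))].
  rewrite mem_filter mem_permutations => /andP[/andP[syt_p bad_p] p_perm].
  split => //.
  - by rewrite size_drop (perm_size p_perm) size_iota /d; lia.
  - by apply/allP => x /mem_drop; rewrite (perm_mem p_perm) mem_iota; lia.
  - by case/and4P: syt_p => _ /andP[].
(* A word is recovered from the code of its lower part, the top part being
   sorted. *)
pose code p := lower_code k n (drop d p).
rewrite -(size_map code).
apply: leq_trans (_ : #|codes_with_successor k n :|: codes_with_max k n| <= _); last first.
  rewrite (leq_trans (leq_card_setU _ _).1) // mulnDl.
  by rewrite leq_add ?card_codes_with_successor ?card_codes_with_max.
rewrite cardE; apply: uniq_leq_size.
  rewrite map_inj_in_uniq ?filter_uniq ?permutations_uniq // => p q hp hq eq_code.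
  have [p_perm sp ap tp _] := bad_spec p hp; have [q_perm sq aq tq _] := bad_spec q hq.
  apply: (perm_sorted_take_eq ltn_trans ltnn _ tp tq (lower_code_inj sp sq ap aq eq_code)).
  by apply: perm_trans p_perm _; rewrite perm_sym.
move=> _ /mapP[p hp ->]; rewrite mem_enum.
have [_ sp ap _ bad_p] := bad_spec p hp.
move: bad_p => /good_tableauPn; rewrite /entries /= reshapeKr ?sp //.
case=> [[a ar a1r]|nr]; apply/setUP; [left|right].
- exact: lower_code_successor ar a1r.
- exact: lower_code_max nr.
Qed.

Lemma N_syt_gt0 lam n : is_partition lam -> lam != [::] ->
  sumn lam + head 0 lam <= n -> 0 < N_syt lam n.
Proof.
move=> hlam hne hn; apply: leq_trans (N_syt_ge hlam hn).
by rewrite expn_gt0 divn_gt0 ?sumn_partition_gt0 //; lia.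
Qed.

Lemma leq_expn2r m n e : m <= n -> m ^ e <= n ^ e.
Proof. by case: e => // e; rewrite leq_exp2r. Qed.

Lemma B_syt_mul_le lam n (k := sumn lam) (l1 := head 0 lam) :
  is_partition lam -> lam != [::] -> 2 * (k + l1) < n ->
  B_syt lam n * n <= (k * k + k) * (4 * k) ^ k * N_syt lam n.
Proof.
move=> hlam hne hn; set L := (n - l1) %/ k.
have hk : 0 < k by exact: sumn_partition_gt0.
have hN : L ^ k <= N_syt lam n by apply: N_syt_ge; lia.
have hB : B_syt lam n <= (k * k + k) * n.+1 ^ k.-1 by apply: B_syt_le; lia.
have hL : 2 * n <= 4 * k * L by have := ltn_ceil (n - l1) hk; rewrite -/L mulSn; lia.
apply: (@leq_trans ((k * k + k) * (2 * n) ^ k)).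
  apply: leq_trans (leq_mul hB (leqnn n)) _.
  rewrite -mulnA leq_mul2l -[k in (2 * n) ^ k](prednK hk) expnSr; apply/orP; right.
  by apply: leq_mul; [apply: leq_expn2r|]; lia.
rewrite -mulnA leq_mul2l; apply/orP; right.
by rewrite (leq_trans (leq_expn2r k hL)) // expnMn leq_mul2l hN orbT.
Qed.

Import Order.TTheory GRing.Theory Num.Theory numFieldNormedType.Exports.
Local Open Scope classical_set_scope.
Local Open Scope ring_scope.

Lemma cvg_ratio_to1 (R : realType) (g b N : nat -> nat) (K : nat) :
  (forall n, N n = (g n + b n)%N) ->
  (\forall n \near \oo, (0 < N n)%N /\ (b n * n <= K * N n)%N) ->
  (fun n => (g n)%:R / (N n)%:R : R) @ \oo --> (1 : R).
Proof.
move=> N_split hK; apply/cvgrPdist_le => e e0; near=> n.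
have [N_gt0 bn_le] : (0 < N n)%N /\ (b n * n <= K * N n)%N by near: n.
have n_ge : K%:R / e <= n%:R :> R by near: n; exact: nbhs_infty_ger.
have Nr_gt0 : 0 < (N n)%:R :> R by rewrite ltr0n.
have n_gt0 : 0 < n%:R :> R by rewrite ltr0n; near: n; exact: nbhs_infty_gt.
have -> : 1 - (g n)%:R / (N n)%:R = (b n)%:R / (N n)%:R :> R.
  by rewrite -{1}(divff (lt0r_neq0 Nr_gt0)) -mulrBl {1}N_split natrD addrAC subrr add0r.
rewrite ger0_norm ?divr_ge0 // ler_pdivrMr // -(ler_pM2r n_gt0).
apply: (@le_trans _ _ ((K * N n)%N%:R)); first by rewrite -natrM ler_nat.
rewrite natrM mulrAC ler_wpM2r //.
by move: n_ge; rewrite ler_pdivrMr // mulrC.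
Unshelve. all: by end_near.
Qed.

Theorem theorem3p2 (R : realType) (lam : seq nat) :
  is_partition lam -> lam != [::] ->
  (fun n : nat => ((G_syt lam n)%:R / (N_syt lam n)%:R : R)) @ \oo --> (1 : R).
Proof.
move=> hlam hne.
apply: (@cvg_ratio_to1 R _ (B_syt lam) _ _ (N_syt_split lam)).
near=> n; split.
- by apply: N_syt_gt0 => //; near: n; exact: nbhs_infty_ge.
- by apply: B_syt_mul_le => //; near: n; exact: nbhs_infty_gt.
Unshelve. all: by end_near.
Qed.
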